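(* Let $G$ be a primitive strongly regular graph with parameters $(v,k,\lambda,\mu)$. Then $k/\Lambda(G) > \sqrt{k/\sqrt{v}}$.
   Context: A graph is strongly regular with parameters $(v,k,\lambda,\mu)$ if it is a $k$-regular graph on $v$ vertices such that each edge lies in exactly $\lambda$ triangles and any two distinct non-adjacent vertices have exactly $\mu$ common neighbours; complete and edgeless graphs are excluded. A strongly regular graph is primitive if both it and its complement are connected. For a $k$-regular graph with adjacency eigenvalues $k=\lambda_1\ge\dots\ge\lambda_v$, $\Lambda(G)=\max\{|\lambda_i|: 2\le i\le v\}$. *)

From mathcomp Require Import all_boot all_order all_algebra.
From mathcomp Require Import reals.
Set Implicit Arguments. Unset Strict Implicit. Unset Printing Implicit Defensive.
Import Order.TTheory GRing.Theory Num.Theory.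
Local Open Scope ring_scope.

Definition simple_graph (v : nat) (e : rel 'I_v) : Prop :=
  symmetric e /\ irreflexive e.

Definition common_nbrs (v : nat) (e : rel 'I_v) (x y : 'I_v) : {set 'I_v} :=
  [set z | e x z && e y z].

(* Strongly regular with parameters (v,k,lam,mu); complete and edgeless
   graphs are excluded. *)
Definition srg (v k lam mu : nat) (e : rel 'I_v) : Prop :=
  simple_graph e /\
  (forall x : 'I_v, #|[set y | e x y]| = k) /\
  (forall x y : 'I_v, e x y -> #|common_nbrs e x y| = lam) /\
  (forall x y : 'I_v, x != y -> ~~ e x y -> #|common_nbrs e x y| = mu) /\
  (exists x y : 'I_v, e x y) /\
  (exists x y : 'I_v, (x != y) && ~~ e x y).

Definition complement_rel (v : nat) (e : rel 'I_v) : rel 'I_v :=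
  fun x y => (x != y) && ~~ e x y.

Definition connected_graph (v : nat) (e : rel 'I_v) : Prop :=
  forall x y : 'I_v, connect e x y.

Definition primitive_graph (v : nat) (e : rel 'I_v) : Prop :=
  connected_graph e /\ connected_graph (complement_rel e).

Definition adjacency (R : realType) (v : nat) (e : rel 'I_v) : 'M[R]_v :=
  \matrix_(i, j) (e i j)%:R.

Definition eigen_list (R : realType) (v : nat) (A : 'M[R]_v) (s : seq R) : Prop :=
  char_poly A = \prod_(x <- s) ('X - x%:P) /\ sorted >=%R s.

(* Lambda(G) = max { |lambda_i| : 2 <= i <= v } for the sorted eigenvalue list. *)
Definition Lambda (R : realType) (s : seq R) : R :=
  \big[Num.max/0]_(x <- behead s) `|x|.

From mathcomp Require Import all_boot all_order all_algebra.
From mathcomp Require Import reals ring lra.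
Set Implicit Arguments. Unset Strict Implicit. Unset Printing Implicit Defensive.
Import Order.TTheory GRing.Theory Num.Theory.
Local Open Scope ring_scope.

(* Besides the simple eigenvalue k, A has only the two eigenvalues x, y, the roots of
   X^2 - (lam - mu) X - (k - mu); primitivity (0 < mu < k, lam + 2 <= k) makes them
   distinct and different from 0 and -1. If x has multiplicity c, then A - y + t J, for a
   suitable t, is (x - y) times a projection of rank c whose entries take three values only,
   and the rank of its entrywise square gives the absolute bound v <= c^2 + c + 1. The trace
   of A^2 gives c x^2 <= vk - k^2, and with |x| <= k this forces x^2 < k sqrt v. *)

Section SeqSums.
Variable R : comNzRingType.

Lemma sumr_const_seq (T : Type) (s : seq T) (c : R) :
  \sum_(x <- s) c = (size s)%:R * c.
Proof.
elim: s => [|a s IH]; first by rewrite big_nil mul0r.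
by rewrite big_cons IH /= mulrS mulrDl mul1r.
Qed.

Lemma sumr_count_mem (T : eqType) (s : seq T) (a : T) (c : R) :
  \sum_(x <- s) ((x == a)%:R * c) = (count_mem a s)%:R * c.
Proof.
elim: s => [|b s IH]; first by rewrite big_nil mul0r.
by rewrite big_cons IH /= natrD mulrDl.
Qed.

Lemma sumr_card (T : finType) (P : pred T) : \sum_(z : T) ((P z)%:R : R) = #|P|%:R.
Proof.
rewrite (eq_bigr (fun z => if P z then 1 else 0)) => [|z _]; last by case: (P z).
by rewrite -big_mkcond sumr_const.
Qed.

Lemma prodrN_seq (T : Type) (s : seq T) (F : T -> R) :
  \prod_(x <- s) - F x = (-1) ^+ size s * \prod_(x <- s) F x.
Proof.
elim: s => [|a s IH]; first by rewrite !big_nil mul1r.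
by rewrite !big_cons IH /= exprS mulN1r !mulNr mulrCA.
Qed.

End SeqSums.

Lemma comp_poly_Xsqr_inj (R : comNzRingType) (p q : {poly R}) :
  p \Po 'X^2 = q \Po 'X^2 -> p = q.
Proof.
move=> pq; apply/polyP => i.
have := congr1 (fun r : {poly R} => r`_(2 * i)%N) pq => /=.
by rewrite !coef_comp_poly_Xn // dvdn_mulr // mulKn.
Qed.

Lemma map_char_poly_mx_comp (R : comNzRingType) n (B : 'M[R]_n) (q : {poly R}) :
  map_mx (comp_poly q) (char_poly_mx B) = q%:M - map_mx polyC B.
Proof.
apply/matrixP => i j; rewrite !mxE.
by rewrite raddfB raddfMn /= comp_polyX comp_polyC.
Qed.

Section CharPolyRoots.
Variables (R : comNzRingType) (n : nat) (A : 'M[R]_n) (s : seq R).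
Hypothesis char_polyA : char_poly A = \prod_(x <- s) ('X - x%:P).

Lemma size_char_poly_roots : size s = n.
Proof. by have := size_char_poly A; rewrite char_polyA size_prod_XsubC; case. Qed.

Lemma mxtrace_char_poly_roots : \tr A = \sum_(x <- s) x.
Proof.
case: n A char_polyA size_char_poly_roots => [|m] B cpB sizes.
  by rewrite (size0nil sizes) big_nil /mxtrace big_ord0.
have sizes1 : (size s).-1 = m by rewrite sizes.
have := char_poly_trace B; rewrite cpB -[X in _`_X]sizes1.
by rewrite coefPn_prod_XsubC ?sizes // => /(_ isT) /oppr_inj.
Qed.

(* det (X + A) is read off char_poly A \Po (-X); then (X - A)(X + A) = X^2 - A^2. *)
Lemma char_poly_sqr_roots :
  char_poly (A *m A) = \prod_(y <- [seq x ^+ 2 | x <- s]) ('X - y%:P).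
Proof.
rewrite big_map; apply: comp_poly_Xsqr_inj; set Ap := map_mx polyC A.
have detXsubA : \det ('X%:M - Ap) = \prod_(x <- s) ('X - x%:P) by rewrite -char_polyA.
have detXaddA : \det ('X%:M + Ap) = \prod_(x <- s) ('X + x%:P).
  have := det_map_mx (comp_poly (- 'X : {poly R})) (char_poly_mx A).
  rewrite map_char_poly_mx_comp -/(char_poly A) char_polyA rmorph_prod /=.
  have -> : (- 'X)%:M - Ap = - ('X%:M + Ap) by rewrite opprD raddfN.
  rewrite -scaleN1r detZ.
  under eq_bigr => x _ do rewrite comp_polyB comp_polyX comp_polyC -opprD.
  rewrite prodrN_seq size_char_poly_roots => /(congr1 ( *%R ((-1) ^+ n))).
  by rewrite !signrMK.
have -> : char_poly (A *m A) \Po 'X^2 = \det (('X%:M - Ap) *m ('X%:M + Ap)).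
  rewrite /char_poly -det_map_mx map_char_poly_mx_comp; congr (\det _).
  rewrite mulmxDr !mulmxBl map_mxM -/Ap addrA (scalar_mxC 'X Ap) subrK.
  by rewrite mul_scalar_mx scale_scalar_mx -expr2.
rewrite det_mulmx detXsubA detXaddA -big_split rmorph_prod /=.
by apply: eq_bigr => x _; rewrite -subr_sqr comp_polyB comp_polyX comp_polyC rmorphXn.
Qed.

End CharPolyRoots.

Section Rank.
Variable F : fieldType.

Lemma mxtrace_idempotent_full_rank_factor n r (P : 'M[F]_(n, r)) (Q : 'M_(r, n)) :
  row_full P -> row_free Q -> P *m Q *m (P *m Q) = P *m Q -> \tr (P *m Q) = r%:R.
Proof.
move=> /row_fullP [BP BP_P] /row_freeP [BQ Q_BQ] PQ_idem.
have QP : Q *m P = 1%:M.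
  have := congr1 (fun M => BP *m M *m BQ) PQ_idem.
  by rewrite /= !mulmxA BP_P !mul1mx -!mulmxA Q_BQ !mulmx1.
by rewrite mxtrace_mulC QP mxtrace1.
Qed.

Lemma mxrank_idempotent n (E : 'M[F]_n) : E *m E = E -> (\rank E)%:R = \tr E.
Proof.
move=> E_idem.
have := mxtrace_idempotent_full_rank_factor (col_base_full E) (row_base_free E).
by rewrite mulmx_base => ->.
Qed.

Lemma mxrank_sum_le m n (I : Type) (r : seq I) (P : pred I)
    (X : I -> 'M[F]_(m, n)) (c : I -> nat) :
  (forall i, P i -> (\rank (X i) <= c i)%N) ->
  (\rank (\sum_(i <- r | P i) X i)%R <= \sum_(i <- r | P i) c i)%N.
Proof.
move=> le_rank; apply: (big_ind2 (fun M k => \rank M <= k)%N) => //.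
  by rewrite mxrank0.
by move=> M1 k1 M2 k2 *; apply: leq_trans (mxrank_add _ _) (leq_add _ _).
Qed.

Lemma mxrank_hadamard_sqr n (M : 'M[F]_n) :
  (\rank (map_mx (fun x => x ^+ 2) M) <= \rank M * \rank M)%N.
Proof.
set r := \rank M; set P := col_base M; set Q := row_base M.
have -> : map_mx (fun x => x ^+ 2) M = \sum_(a < r) \sum_(b < r)
    (\col_i (P i a * P i b) *m \row_j (Q a j * Q b j)).
  apply/matrixP => i j; rewrite !mxE summxE.
  under eq_bigr do rewrite summxE.
  have := congr1 (fun N : 'M_n => N i j) (mulmx_base M); rewrite /= mxE -/P -/Q => <-.
  rewrite expr2 mulr_suml; apply: eq_bigr => a _; rewrite mulr_sumr.
  by apply: eq_bigr => b _; rewrite !mxE big_ord1 !mxE; ring.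
apply: (leq_trans (@mxrank_sum_le _ _ _ _ _ _ (fun _ => r) _)) => [a _|].
  apply: (leq_trans (@mxrank_sum_le _ _ _ _ _ _ (fun _ => 1%N) _)) => [b _|].
    exact: leq_trans (mxrankM_maxl _ _) (rank_leq_col _).
  by rewrite sum_nat_const card_ord muln1.
by rewrite sum_nat_const card_ord.
Qed.

Lemma mxrank_const_mx_le1 m n (c : F) : (\rank (const_mx c : 'M[F]_(m, n)) <= 1)%N.
Proof.
have -> : const_mx c = (const_mx c : 'M_(m, 1)) *m (const_mx 1 : 'M_(1, n)).
  by apply/matrixP => i j; rewrite !mxE big_ord1 !mxE mulr1.
exact: leq_trans (mxrankM_maxl _ _) (rank_leq_col _).
Qed.

(* The scalar matrix d%:M lies in the span of the entrywise square of M, of M itself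
   and of the all-ones matrix. *)
Lemma absolute_bound_rank n (M : 'M[F]_n) (a b d : F) : d != 0 ->
  (forall i j, (M i j - a) * (M i j - b) = (i == j)%:R * d) ->
  (n <= \rank M * \rank M + \rank M + 1)%N.
Proof.
move=> d_neq0 quadM.
have rank_d : \rank (d%:M : 'M_n) = n by rewrite -scalemx1 mxrank_scale_nz ?mxrank1.
rewrite -{1}rank_d.
have -> : (d%:M : 'M_n) =
    map_mx (fun x => x ^+ 2) M + (- (a + b)) *: M + (a * b) *: const_mx 1.
  by apply/matrixP => i j; rewrite !mxE -mulr_natl -quadM; ring.
apply: leq_trans (mxrank_add _ _) (leq_add _ _).
  apply: leq_trans (mxrank_add _ _) (leq_add (mxrank_hadamard_sqr M) _).
  exact: mxrank_scale.
exact: leq_trans (mxrank_scale _ _) (mxrank_const_mx_le1 _ _ _).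
Qed.

End Rank.

Lemma bigmax_norm_seq_attained (R : realDomainType) (t : seq R) : t != [::] ->
  exists2 z, z \in t & \big[Num.max/0]_(x <- t) `|x| = `|z|.
Proof.
elim: t => [//|a t IH] _; rewrite big_cons.
have [->|t_neq0] := eqVneq t [::].
  by exists a; rewrite ?mem_head // big_nil; apply/max_idPl.
have [z zt ->] := IH t_neq0.
have [az|za] := leP `|a| `|z|.
  by exists z; rewrite ?in_cons ?zt ?orbT //; apply/max_idPr.
by exists a; rewrite ?mem_head //; apply/max_idPl/ltW.
Qed.

Section RealClosed.
Variable R : rcfType.

(* Either K < sqrt V, or sqrt V <= K and then
   C X^2 <= K (V - K) <= K sqrt V (sqrt V - 1) < C K sqrt V. *)
Lemma sqr_lt_mul_sqrt (K V X C : R) : 0 < K -> 1 <= C -> V <= C ^+ 2 + C + 1 ->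
  C * X ^+ 2 <= V * K - K ^+ 2 -> X ^+ 2 <= K ^+ 2 -> X ^+ 2 < K * Num.sqrt V.
Proof.
move=> K_gt0 C_ge1 V_le CX_le X_le.
have V_ge0 : 0 <= V by have := sqr_ge0 X; nra.
set w := Num.sqrt V; have w_ge0 : 0 <= w := sqrtr_ge0 V.
have w2 : w ^+ 2 = V by rewrite sqr_sqrtr.
have [K_lt_w|w_le_K] := ltrP K w; first by nra.
have w_lt : w < C + 1.
  rewrite ltNge; apply/negP => Cw; suff : (C + 1) ^+ 2 <= V by nra.
  by rewrite -w2 ler_sqr ?nnegrE //; lra.
have w_gt0 : 0 < w by rewrite sqrtr_gt0; nra.
have CX_lt : C * X ^+ 2 < C * (K * w).
  have : K * w * (w - 1) < K * w * C by rewrite ltr_pM2l ?mulr_gt0 //; lra.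
  nra.
by rewrite ltr_pM2l in CX_lt; lra.
Qed.

Lemma sqrt_div_lt_div_norm (K w z : R) : 0 < K -> 0 < w -> z != 0 ->
  z ^+ 2 < K * w -> Num.sqrt (K / w) < K / `|z|.
Proof.
move=> K_gt0 w_gt0 z_neq0 z2_lt.
have z2_gt0 : 0 < z ^+ 2 by rewrite exprn_even_gt0.
have rhs_ge0 : 0 <= K / `|z| := divr_ge0 (ltW K_gt0) (normr_ge0 z).
rewrite -(ger0_norm rhs_ge0) -(sqrtr_sqr (K / `|z|)) ltr_sqrt; last first.
  by rewrite exprn_gt0 // divr_gt0 ?normr_gt0.
rewrite expr_div_n real_normK ?num_real // -subr_gt0.
have -> : K ^+ 2 / z ^+ 2 - K / w = K * (K * w - z ^+ 2) / (w * z ^+ 2).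
  by field; rewrite z_neq0 lt0r_neq0.
by apply: divr_gt0; apply: mulr_gt0; rewrite // subr_gt0.
Qed.

End RealClosed.

Section StronglyRegular.
Variables (v k lam mu : nat) (e : rel 'I_v).
Hypothesis srgG : srg k lam mu e.

Let e_sym : symmetric e. Proof. by case: srgG => -[]. Qed.
Let e_irr : irreflexive e. Proof. by case: srgG => -[]. Qed.
Let card_nbrs x : #|[set y | e x y]| = k. Proof. by case: srgG => _ [deg _]. Qed.
Let card_common_adj x y : e x y -> #|common_nbrs e x y| = lam.
Proof. by case: srgG => _ [_ [adj _]]; apply: adj. Qed.
Let card_common_nadj x y : x != y -> ~~ e x y -> #|common_nbrs e x y| = mu.
Proof. by case: srgG => _ [_ [_ [nadj _]]]; apply: nadj. Qed.
Let has_edge : exists x y, e x y. Proof. by case: srgG => _ [_ [_ [_ []]]]. Qed.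
Let has_nonedge : exists x y, (x != y) && ~~ e x y.
Proof. by case: srgG => _ [_ [_ [_ []]]]. Qed.

Lemma srg_k_gt0 : (0 < k)%N.
Proof.
by have [x [y xy]] := has_edge; rewrite -(card_nbrs x); apply/card_gt0P; exists y; rewrite inE.
Qed.

Lemma srg_lam_lt_k : (lam < k)%N.
Proof.
have [x [y xy]] := has_edge; rewrite -(card_common_adj xy) -(card_nbrs x).
rewrite (cardsD1 y) inE xy add1n ltnS; apply/subset_leq_card/subsetP => z.
by rewrite !inE => /andP[xz yz]; rewrite xz andbT; apply: contraTneq yz => ->; rewrite e_irr.
Qed.

Lemma srg_mu_le_k : (mu <= k)%N.
Proof.
have [x [y /andP[x_neq_y xy]]] := has_nonedge.
rewrite -(card_common_nadj x_neq_y xy) -(card_nbrs x).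
by apply/subset_leq_card/subsetP => z; rewrite !inE => /andP[].
Qed.

Lemma srg_kS_lt_v : (k.+1 < v)%N.
Proof.
have [x [y /andP[x_neq_y xy]]] := has_nonedge.
have := cardsD1 x [set: 'I_v]; rewrite cardsT card_ord inE => ->.
rewrite (cardsD1 y) !inE eq_sym x_neq_y -(card_nbrs x) !ltnS.
apply/subset_leq_card/subsetP => z; rewrite !inE andbT => xz; apply/andP; split.
  by apply: contraNneq xy => <-.
by apply: contraTneq xz => ->; rewrite e_irr.
Qed.

Lemma srg_v_gt0 : (0 < v)%N.
Proof. exact: leq_ltn_trans srg_kS_lt_v. Qed.

(* With mu = 0, adjacency would be transitive on distinct vertices, so the connected
   graph would be complete. *)
Lemma srg_mu_gt0 : connected_graph e -> (0 < mu)%N.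
Proof.
move=> connG; rewrite lt0n; apply/negP => /eqP mu0.
have adj_trans a b c : e a b -> e b c -> (a == c) || e a c.
  move=> ab bc; have [//|a_neq_c] := eqVneq a c; apply/negPn/negP => ac.
  have /eqP := card_common_nadj a_neq_c ac; rewrite mu0 cards_eq0.
  by move=> /eqP/setP/(_ b); rewrite !inE ab e_sym bc.
have path_adj p a : path e a p -> (a == last a p) || e a (last a p).
  elim: p a => [|b p IHp] a /=; first by rewrite eqxx.
  case/andP=> ab /IHp /orP[/eqP <-|]; first by rewrite ab orbT.
  exact: adj_trans.
have [x [y /andP[x_neq_y xy]]] := has_nonedge.
have /connectP[p xp y_last] := connG x y.
by have := path_adj p x xp; rewrite -y_last (negbTE x_neq_y) (negbTE xy).
Qed.

(* With mu = k, non-adjacent vertices have the same neighbourhood, which is then constant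
   along paths of the connected complement; but an edge xy separates N(x) from N(y). *)
Lemma srg_mu_lt_k : connected_graph (complement_rel e) -> (mu < k)%N.
Proof.
move=> connGc; rewrite ltn_neqAle srg_mu_le_k andbT; apply/eqP => mu_k.
have nbrs_nadj a b : complement_rel e a b -> [set z | e a z] = [set z | e b z].
  case/andP=> a_neq_b ab.
  have common_eq c : (c == a) || (c == b) -> common_nbrs e a b = [set z | e c z].
    move=> c_ab; apply/eqP; rewrite eqEcard card_common_nadj // mu_k card_nbrs leqnn andbT.
    by apply/subsetP => z; rewrite !inE; case/orP: c_ab => /eqP-> /andP[].
  by rewrite -(common_eq a) ?eqxx // (common_eq b) ?eqxx ?orbT.
have path_nbrs p a : path (complement_rel e) a p ->
    [set z | e a z] = [set z | e (last a p) z].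
  by elim: p a => [|b p IHp] a //= /andP[/nbrs_nadj -> /IHp].
have [x [y xy]] := has_edge.
have /connectP[p xp y_last] := connGc x y.
by have /setP/(_ y) := path_nbrs p x xp; rewrite -y_last !inE xy e_irr.
Qed.

Variable R : realType.
Local Notation A := (adjacency R e).
Local Notation J := (const_mx 1 : 'M[R]_v).

Lemma adjacencyE i j : A i j = (e i j)%:R.
Proof. by rewrite mxE. Qed.

Lemma sum_adjacency i : \sum_j A i j = k%:R.
Proof.
by rewrite -(card_nbrs i) cardsE -sumr_card; apply: eq_bigr => j _; rewrite adjacencyE.
Qed.

Lemma adjacency_sqr : A *m A = k%:R *: 1%:M + lam%:R *: A + mu%:R *: (J - 1%:M - A).
Proof.
apply/matrixP => i j; rewrite !mxE.
have -> : \sum_z A i z * A z j = #|common_nbrs e i j|%:R.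
  rewrite cardsE -sumr_card; apply: eq_bigr => z _.
  by rewrite !adjacencyE (e_sym z j) -natrM mulnb.
have [<-|i_neq_j] := eqVneq i j.
  have -> : common_nbrs e i i = [set z | e i z] by apply/setP => z; rewrite !inE andbb.
  by rewrite card_nbrs e_irr /=; ring.
case ij: (e i j); first by rewrite card_common_adj //=; ring.
by rewrite card_common_nadj ?ij //=; ring.
Qed.

Lemma adjacency_mulJ : A *m J = k%:R *: J.
Proof.
apply/matrixP => i j; rewrite !mxE mulr1 -(sum_adjacency i).
by apply: eq_bigr => z _; rewrite !mxE mulr1.
Qed.

Lemma mulJ_adjacency : J *m A = k%:R *: J.
Proof.
apply/matrixP => i j; rewrite !mxE -(sum_adjacency j) mulr1.
by apply: eq_bigr => z _; rewrite !mxE mul1r e_sym.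
Qed.

Lemma mulJJ : J *m J = v%:R *: J.
Proof.
apply/matrixP => i j; rewrite !mxE (eq_bigr (fun=> 1)) => [|z _]; last by rewrite !mxE mulr1.
by rewrite sumr_const card_ord mulr1.
Qed.

Lemma mxtrace_adjacency : \tr A = 0.
Proof. by rewrite /mxtrace big1 // => i _; rewrite adjacencyE e_irr. Qed.

Definition bose_mesner (a b c : R) : 'M[R]_v := a *: 1%:M + b *: A + c *: J.

Lemma bose_mesnerE a b c i j :
  bose_mesner a b c i j = a * (i == j)%:R + b * (e i j)%:R + c.
Proof. by rewrite !mxE; ring. Qed.

Lemma mxtrace_bose_mesner a b c : \tr (bose_mesner a b c) = (a + c) * v%:R.
Proof.
rewrite !mxtraceD !mxtraceZ mxtrace1 mxtrace_adjacency /mxtrace.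
by rewrite (eq_bigr (fun=> 1)) ?sumr_const ?card_ord => [|i _]; rewrite ?mxE; ring.
Qed.

Lemma bose_mesnerZ r a b c : r *: bose_mesner a b c = bose_mesner (r * a) (r * b) (r * c).
Proof. by rewrite !scalerDr !scalerA. Qed.

Lemma bose_mesner_mul a1 b1 c1 a2 b2 c2 :
  bose_mesner a1 b1 c1 *m bose_mesner a2 b2 c2 =
  bose_mesner (a1 * a2 + b1 * b2 * (k%:R - mu%:R))
              (a1 * b2 + b1 * a2 + b1 * b2 * (lam%:R - mu%:R))
              (a1 * c2 + c1 * a2 + b1 * b2 * mu%:R + k%:R * (b1 * c2 + c1 * b2)
                 + v%:R * c1 * c2).
Proof.
rewrite !mulmxDl !mulmxDr -!scalemxAl -!scalemxAr !scalerA !(mul1mx, mulmx1).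
rewrite adjacency_sqr adjacency_mulJ mulJ_adjacency mulJJ.
by apply/matrixP => i j; rewrite !mxE; ring.
Qed.

Lemma adjacency_sqr_bose_mesner :
  A *m A = bose_mesner (k%:R - mu%:R) (lam%:R - mu%:R) mu%:R.
Proof. by rewrite adjacency_sqr; apply/matrixP => i j; rewrite !mxE; ring. Qed.

(* Compare the diagonal entries of (A A) J and A (A J). *)
Lemma srg_param_identity :
  k%:R ^+ 2 = k%:R + lam%:R * k%:R + mu%:R * (v%:R - 1 - k%:R) :> R.
Proof.
have AAJ : A *m A *m J = A *m (A *m J) by rewrite mulmxA.
have A_bm : A = bose_mesner 0 1 0 by rewrite /bose_mesner !scale0r add0r addr0 scale1r.
have J_bm : J = bose_mesner 0 0 1 by rewrite /bose_mesner !scale0r !add0r scale1r.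
have i0 : 'I_v := Ordinal srg_v_gt0.
move: AAJ; rewrite adjacency_sqr_bose_mesner A_bm J_bm !bose_mesner_mul.
by move=> /matrixP/(_ i0 i0); rewrite !bose_mesnerE e_irr eqxx /=; lra.
Qed.

Definition eigen_quad (x : R) : R := x ^+ 2 - (lam%:R - mu%:R) * x - (k%:R - mu%:R).

(* A left eigenvector u for x <> k satisfies u J = 0, since (x - k) u J = u A J - k u J = 0. *)
Lemma eigenvalue_adjacency x : eigenvalue A x -> x = k%:R \/ eigen_quad x = 0.
Proof.
case/eigenvalueP => u uA u_neq0; have [->|x_neq_k] := eqVneq x k%:R; [by left | right].
have uJ : u *m J = 0.
  have : (x - k%:R) *: (u *m J) = 0.
    by rewrite scalerBl scalemxAl -uA -mulmxA adjacency_mulJ -scalemxAr subrr.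
  by move/eqP; rewrite scalemx_eq0 subr_eq0 (negbTE x_neq_k) => /eqP.
have : u *m (A *m A) = (x * x) *: u by rewrite mulmxA uA -scalemxAl uA scalerA.
rewrite adjacency_sqr_bose_mesner /bose_mesner !mulmxDr -!scalemxAr mulmx1 uA uJ.
move/eqP; rewrite scaler0 addr0 scalerA -scalerDl -subr_eq0 -scalerBl scalemx_eq0.
by rewrite (negbTE u_neq0) orbF => /eqP eq0; rewrite /eigen_quad -[RHS]oppr0 -eq0; ring.
Qed.

Lemma eigen_quad_root_bound x : eigen_quad x = 0 -> - k%:R <= x <= k%:R.
Proof.
have lamS_le_k : lam%:R + 1 <= k%:R :> R by rewrite natr1 ler_nat srg_lam_lt_k.
have mu_le_k : mu%:R <= k%:R :> R by rewrite ler_nat srg_mu_le_k.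
have lam_ge0 : 0 <= lam%:R :> R := ler0n _ _.
have mu_ge0 : 0 <= mu%:R :> R := ler0n _ _.
by rewrite /eigen_quad => quad0; apply/andP; split; rewrite leNgt; apply/negP => ?; nra.
Qed.

(* k = lam + 1 would force mu (v - k - 1) = k (k - lam - 1) = 0. *)
Lemma srg_lamS_lt_k : connected_graph e -> (lam.+1 < k)%N.
Proof.
move=> connG; rewrite ltn_neqAle srg_lam_lt_k andbT; apply/eqP => k_eq.
have : (lam.+3)%:R <= v%:R :> R by rewrite ler_nat k_eq srg_kS_lt_v.
have : 1 <= mu%:R :> R by rewrite ler1n srg_mu_gt0.
have := srg_param_identity; rewrite -k_eq -!natr1; nra.
Qed.

Section EigenvalueList.
Hypothesis primG : primitive_graph e.
Variable s : seq R.
Hypothesis s_eigen : eigen_list A s.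

Let char_polyA : char_poly A = \prod_(x <- s) ('X - x%:P). Proof. by case: s_eigen. Qed.
Let s_sorted : sorted >=%R s. Proof. by case: s_eigen. Qed.
Let mu_gt0 : (0 < mu)%N. Proof. by apply: srg_mu_gt0; case: primG. Qed.
Let mu_lt_k : (mu < k)%N. Proof. by apply: srg_mu_lt_k; case: primG. Qed.
Let lamS_lt_k : (lam.+1 < k)%N. Proof. by apply: srg_lamS_lt_k; case: primG. Qed.

Lemma sum_eigen_list : \sum_(x <- s) x = 0.
Proof. by rewrite -(mxtrace_char_poly_roots char_polyA) mxtrace_adjacency. Qed.

Lemma sum_sqr_eigen_list : \sum_(x <- s) x ^+ 2 = v%:R * k%:R.
Proof.
have := mxtrace_char_poly_roots (char_poly_sqr_roots char_polyA).
rewrite big_map => <-; rewrite adjacency_sqr_bose_mesner mxtrace_bose_mesner.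
by rewrite subrK mulrC.
Qed.

Lemma eigen_list_root x : x \in s -> x = k%:R \/ eigen_quad x = 0.
Proof.
move=> xs; apply: eigenvalue_adjacency.
by rewrite eigenvalue_root_char char_polyA root_prod_XsubC.
Qed.

Lemma sum_eigen_quad_eigen_list : \sum_(x <- s) eigen_quad x = mu%:R * v%:R.
Proof.
rewrite /eigen_quad !sumrB -mulr_sumr sum_sqr_eigen_list sum_eigen_list !sumr_const_seq.
by rewrite (size_char_poly_roots char_polyA); ring.
Qed.

Lemma eigen_quad_k : eigen_quad k%:R = mu%:R * v%:R.
Proof. by have := srg_param_identity; rewrite /eigen_quad; lra. Qed.

Lemma count_eigen_list_k : count_mem (k%:R : R) s = 1%N.
Proof.
have muv_neq0 : mu%:R * v%:R != 0 :> R.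
  by rewrite mulf_neq0 // pnatr_eq0 -lt0n ?srg_v_gt0.
have : \sum_(x <- s) eigen_quad x = (count_mem (k%:R : R) s)%:R * eigen_quad k%:R.
  rewrite -sumr_count_mem; apply: eq_big_seq => x xs.
  have [->|x_neq_k] := eqVneq x k%:R; first by rewrite mul1r.
  by rewrite mul0r; case: (eigen_list_root xs) => // x_k; rewrite x_k eqxx in x_neq_k.
rewrite sum_eigen_quad_eigen_list eigen_quad_k -{1}[_ * _]mul1r.
by move=> /(mulIf muv_neq0) /esym/eqP; rewrite pnatr_eq1 => /eqP.
Qed.

Lemma eigen_list_cons : s = k%:R :: behead s.
Proof.
have := count_eigen_list_k; have := eigen_list_root; have := s_sorted.
case: s => [//|h t] /= sorted_ht root_ht count_k; congr (_ :: _).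
apply/eqP; apply: contraT => h_neq_k.
have k_t : k%:R \in t.
  rewrite -has_pred1 has_count; move: h_neq_k count_k.
  by case: eqP => //= _ _; rewrite add0n => ->.
have k_le_h : k%:R <= h.
  by apply: (allP (order_path_min (rev_trans le_trans) sorted_ht)).
have [h_k|quad_h] := root_ht h (mem_head h t); first by rewrite h_k eqxx in h_neq_k.
have /andP[_ h_le_k] := eigen_quad_root_bound quad_h.
by move: h_neq_k; rewrite eq_le h_le_k k_le_h.
Qed.

Lemma behead_eigen_quad z : z \in behead s -> eigen_quad z = 0.
Proof.
move=> zt; have := count_eigen_list_k; rewrite {1}eigen_list_cons /= eqxx => /eqP.
rewrite eqSS => /eqP/count_memPn k_nt.
case: (eigen_list_root (mem_behead zt)) => // z_k.
by rewrite -z_k zt in k_nt.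
Qed.

Lemma size_behead_eigen_list : size (behead s) = v.-1.
Proof. by rewrite size_behead (size_char_poly_roots char_polyA). Qed.

Lemma sum_behead_eigen_list : \sum_(z <- behead s) z = - k%:R.
Proof.
have := sum_eigen_list; rewrite eigen_list_cons big_cons.
by move/eqP; rewrite addrC addr_eq0 => /eqP.
Qed.

Lemma sum_sqr_behead_eigen_list :
  \sum_(z <- behead s) z ^+ 2 = v%:R * k%:R - k%:R ^+ 2.
Proof.
by rewrite -sum_sqr_eigen_list [in RHS]eigen_list_cons big_cons addrAC subrr add0r.
Qed.

Lemma eigen_quad0_neq0 : eigen_quad 0 != 0.
Proof.
have : mu%:R < k%:R :> R by rewrite ltr_nat.
by rewrite /eigen_quad => ?; apply/eqP => ?; lra.
Qed.

Lemma eigen_quadN1_neq0 : eigen_quad (-1) != 0.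
Proof.
have : (lam.+2)%:R <= k%:R :> R by rewrite ler_nat.
by rewrite /eigen_quad -!natr1 => ?; apply/eqP => ?; lra.
Qed.

Lemma behead_eigen_list_neq0 z : z \in behead s -> z != 0.
Proof.
by move=> /behead_eigen_quad quad0; apply: contra_eq_neq quad0 => ->; rewrite eigen_quad0_neq0.
Qed.

Section NonprincipalEigenvalue.
Variable x : R.
Hypothesis x_in : x \in behead s.

Let y := lam%:R - mu%:R - x.
Let c := count_mem x (behead s).

Lemma eigen_quad_other_root z : eigen_quad z = (z - x) * (z - y).
Proof. by rewrite -[RHS]addr0 -(behead_eigen_quad x_in) /eigen_quad /y; ring. Qed.

Lemma behead_eigen_list_two_values z : z \in behead s -> z = x \/ z = y.
Proof.
move=> /behead_eigen_quad; rewrite eigen_quad_other_root => /eqP.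
by rewrite mulf_eq0 !subr_eq0 => /orP[] /eqP; [left | right].
Qed.

Lemma neq_other_root : x != y.
Proof.
apply/eqP => x_y; have := eigen_quad_other_root 0; rewrite -x_y.
have : mu%:R < k%:R :> R by rewrite ltr_nat.
by rewrite /eigen_quad; nra.
Qed.

Lemma multiplicity_trace : c%:R * (x - y) = - k%:R - y * (v%:R - 1).
Proof.
have -> : c%:R * (x - y) = \sum_(z <- behead s) (z - y).
  rewrite -sumr_count_mem; apply: eq_big_seq => z zt.
  case: (behead_eigen_list_two_values zt) => ->; first by rewrite eqxx mul1r.
  by rewrite eq_sym (negbTE neq_other_root) mul0r subrr.
rewrite sumrB sum_behead_eigen_list sumr_const_seq size_behead_eigen_list.
by rewrite -subn1 natrB ?srg_v_gt0 // mulrC.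
Qed.

(* The all-ones vector spans the k-eigenspace and the other eigenvalues are x and y, so
   (A - y) + t J with t chosen to kill the all-ones vector is (x - y) times the projection
   onto the x-eigenspace. *)
Let F := bose_mesner (- y) 1 ((y - k%:R) / v%:R).

Lemma eigenprojection_sqr : F *m F = (x - y) *: F.
Proof.
have v_neq0 : v%:R != 0 :> R by rewrite pnatr_eq0 -lt0n srg_v_gt0.
have xy : x * y = mu%:R - k%:R by have := eigen_quad_other_root 0; rewrite /eigen_quad; lra.
have x_add_y : x + y = lam%:R - mu%:R by rewrite /y; ring.
have mu_v : mu%:R = (k%:R - x) * (k%:R - y) / v%:R.
  apply: (mulIf v_neq0); rewrite divfK //.
  have -> : (k%:R - x) * (k%:R - y) = k%:R ^+ 2 - k%:R * (x + y) + x * y by ring.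
  by rewrite x_add_y xy srg_param_identity; ring.
rewrite bose_mesner_mul bose_mesnerZ; congr bose_mesner.
- by rewrite -[k%:R - _]opprB -xy; ring.
- by rewrite /y; ring.
- by rewrite mu_v; field.
Qed.

Lemma mxrank_eigenprojection : \rank F = c.
Proof.
have xy_neq0 : x - y != 0 by rewrite subr_eq0 neq_other_root.
have v_neq0 : v%:R != 0 :> R by rewrite pnatr_eq0 -lt0n srg_v_gt0.
have rankF : \rank ((x - y)^-1 *: F) = \rank F by rewrite mxrank_scale_nz ?invr_eq0.
apply/eqP; rewrite -(eqr_nat R) -rankF mxrank_idempotent; last first.
  by rewrite -scalemxAl -scalemxAr eigenprojection_sqr !scalerA mulfVK.
rewrite mxtraceZ mxtrace_bose_mesner -[c%:R](mulfK xy_neq0) multiplicity_trace.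
by apply/eqP; field; rewrite xy_neq0 v_neq0.
Qed.

(* Off the diagonal F takes only the two values t + 1 and t; on it, t - y. *)
Lemma multiplicity_absolute_bound : (v <= c * c + c + 1)%N.
Proof.
have quad_y : eigen_quad y = 0 by rewrite eigen_quad_other_root subrr mulr0.
have y_neq0 : y != 0 by apply: contra_eq_neq quad_y => ->; rewrite eigen_quad0_neq0.
have yS_neq0 : y + 1 != 0.
  by rewrite addr_eq0; apply: contra_eq_neq quad_y => ->; rewrite eigen_quadN1_neq0.
set t := (y - k%:R) / v%:R.
rewrite -mxrank_eigenprojection.
apply: (@absolute_bound_rank _ _ _ (t + 1) t (y * (y + 1))); first exact: mulf_neq0.
move=> i j; rewrite bose_mesnerE -/t; have [<-|i_neq_j] := eqVneq i j.
  by rewrite e_irr /=; ring.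
by case: (e i j) => /=; ring.
Qed.

Lemma multiplicity_sqr_le : c%:R * x ^+ 2 <= v%:R * k%:R - k%:R ^+ 2.
Proof.
rewrite -sum_sqr_behead_eigen_list -sumr_count_mem; apply: ler_sum => z _.
by have [->|_] := eqVneq z x; rewrite ?mul1r // mul0r sqr_ge0.
Qed.

Lemma nonprincipal_sqr_lt : x ^+ 2 < k%:R * Num.sqrt v%:R.
Proof.
apply: (@sqr_lt_mul_sqrt _ _ _ _ c%:R).
- by rewrite ltr0n srg_k_gt0.
- by rewrite ler1n -has_count has_pred1.
- by have := multiplicity_absolute_bound; rewrite -(ler_nat R) !natrD natrM expr2.
- exact: multiplicity_sqr_le.
- have /andP[kx xk] := eigen_quad_root_bound (behead_eigen_quad x_in).
  have k_ge0 : 0 <= k%:R :> R := ler0n _ _.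
  by nra.
Qed.

End NonprincipalEigenvalue.

End EigenvalueList.

End StronglyRegular.

Unset Implicit Arguments.

Theorem lemma1p3 (R : realType) (v k lam mu : nat) (e : rel 'I_v)
    (s : seq R) :
  srg k lam mu e -> primitive_graph e ->
  eigen_list (adjacency R e) s ->
  Num.sqrt (k%:R / Num.sqrt (v%:R : R)) < k%:R / Lambda s.
Proof.
move=> srgG primG s_eigen.
have behead_neq0 : behead s != [::].
  rewrite -size_eq0 (size_behead_eigen_list s_eigen) -subn1 subn_eq0 -ltnNge.
  exact: leq_ltn_trans (ltn0Sn k) (srg_kS_lt_v srgG).
rewrite /Lambda; have [z zt ->] := bigmax_norm_seq_attained behead_neq0.
apply: sqrt_div_lt_div_norm.
- by rewrite ltr0n (srg_k_gt0 srgG).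
- by rewrite sqrtr_gt0 ltr0n (srg_v_gt0 srgG).
- by have := behead_eigen_list_neq0 srgG primG s_eigen zt.
- by have := nonprincipal_sqr_lt srgG primG s_eigen zt.
Qed.
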